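(* Let $C$ be a small category. If there is a non-identity morphism $X\to Y$ in $Sd(C)$, then $\dim(X)<\dim(Y)$, where $\dim$ of a simplex is its dimension $q_X$.
   Context: For $q\ge0$, $[q]=\{0<\dots<q\}$ viewed as a category. A $q$-simplex of the nerve $NC$ is a functor $X:[q]\to C$ (a chain of $q$ composable arrows); $q_X=q$ is its dimension. It is degenerate if $X=Y\circ s$ for a simplex $Y$ and surjective order-preserving $s:[q]\to[p]$ with $p<q$ (equivalently some arrow $X_{i-1}\to X_i$ is an identity), non-degenerate otherwise. $\Delta/C$ has all simplices as objects and as morphisms $X\to Y$ the order-preserving $\xi:[q_X]\to[q_Y]$ with $Y\circ\xi=X$, written $\xi_*$. For a $q$-simplex $X$ and surjective order-preserving $s:[q+1]\to[q]$ with order-preserving right inverses $d,d'$, $d_*,d'_*:X\to X\circ s$ are elementary equivalent; $\sim$ is the smallest equivalence relation on morphisms of $\Delta/C$ compatible with composition containing these pairs; $[\Delta/C]$ is the quotient category; $Sd(C)$ is the full subcategory of $[\Delta/C]$ on the non-degenerate simplices. *)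

From Stdlib Require Import List Arith.
Import ListNotations.

(* A small category, presented single-sorted: a type of objects, a type of
   arrows with domain/codomain, identities and composition
   (comp g f = g o f, defined when cod f = dom g). *)
Record Category := {
  Ob : Type;
  Arr : Type;
  dom : Arr -> Ob;
  cod : Arr -> Ob;
  idc : Ob -> Arr;
  comp : Arr -> Arr -> Arr;
  dom_id : forall x, dom (idc x) = x;
  cod_id : forall x, cod (idc x) = x;
  dom_comp : forall f g, cod f = dom g -> dom (comp g f) = dom f;
  cod_comp : forall f g, cod f = dom g -> cod (comp g f) = cod g;
  comp_id_r : forall f, comp f (idc (dom f)) = f;
  comp_id_l : forall f, comp (idc (cod f)) f = f;
  comp_assoc : forall f g h, cod f = dom g -> cod g = dom h ->
      comp h (comp g f) = comp (comp h g) f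
}.

Section Nerve.
Variable C : Category.

(* A q-simplex X : [q] -> C, given as its chain of q composable arrows
   X_0 -> X_1 -> ... -> X_q (the starting object X_0 plus the arrows).
   A functor [q] -> C is uniquely determined by this chain, so Leibniz
   equality of (valid) chains is equality of functors. *)
Record simplex := { s0 : Ob C; sarr : list (Arr C) }.

Definition dim (X : simplex) : nat := length (sarr X).

Fixpoint chain (x : Ob C) (l : list (Arr C)) : Prop :=
  match l with
  | [] => True
  | a :: l' => dom C a = x /\ chain (cod C a) l'
  end.

Definition valid (X : simplex) : Prop := chain (s0 X) (sarr X).

Definition obj (X : simplex) (i : nat) : Ob C :=
  match i with
  | 0 => s0 X
  | S k => cod C (nth k (sarr X) (idc C (s0 X)))
  end.

(* the arrow X(j <= k) : X_j -> X_k, composite of the arrows j+1, ..., k *)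
Definition seg (X : simplex) (j k : nat) : Arr C :=
  fold_left (fun acc a => comp C a acc)
            (firstn (k - j) (skipn j (sarr X))) (idc C (obj X j)).

Definition precomp (Y : simplex) (xi : nat -> nat) (q : nat) : simplex :=
  {| s0 := obj Y (xi 0);
     sarr := map (fun i => seg Y (xi i) (xi (S i))) (seq 0 q) |}.

Definition order_pres (xi : nat -> nat) (q p : nat) : Prop :=
  (forall i, i <= q -> xi i <= p) /\
  (forall i j, i <= j -> j <= q -> xi i <= xi j).

Definition surj_op (s : nat -> nat) (q p : nat) : Prop :=
  order_pres s q p /\ (forall j, j <= p -> exists i, i <= q /\ s i = j).

Definition degenerate (X : simplex) : Prop :=
  exists (Y : simplex) (s : nat -> nat),
    valid Y /\ dim Y < dim X /\ surj_op s (dim X) (dim Y) /\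
    precomp Y s (dim X) = X.

Definition nondegenerate (X : simplex) : Prop := valid X /\ ~ degenerate X.

(* xi_* : X -> Y is a morphism of Delta/C (xi only matters on [q_X]) *)
Definition is_mor (X Y : simplex) (xi : nat -> nat) : Prop :=
  valid X /\ valid Y /\ order_pres xi (dim X) (dim Y) /\
  precomp Y xi (dim X) = X.

(* The smallest equivalence relation on morphisms of Delta/C (relating
   parallel morphisms X -> Y), compatible with composition, containing the
   elementary equivalences d_* ~ d'_* : X -> X o s. *)
Inductive msim : simplex -> simplex -> (nat -> nat) -> (nat -> nat) -> Prop :=
  | msim_refl : forall X Y xi xi',
      is_mor X Y xi -> (forall i, i <= dim X -> xi i = xi' i) ->
      msim X Y xi xi'
  | msim_elem : forall X q s d d',
      valid X -> dim X = q ->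
      surj_op s (S q) q ->
      order_pres d q (S q) -> (forall i, i <= q -> s (d i) = i) ->
      order_pres d' q (S q) -> (forall i, i <= q -> s (d' i) = i) ->
      msim X (precomp X s (S q)) d d'
  | msim_sym : forall X Y xi xi', msim X Y xi xi' -> msim X Y xi' xi
  | msim_trans : forall X Y xi1 xi2 xi3,
      msim X Y xi1 xi2 -> msim X Y xi2 xi3 -> msim X Y xi1 xi3
  | msim_postcomp : forall X Y Z xi xi' eta,
      msim X Y xi xi' -> is_mor Y Z eta ->
      msim X Z (fun i => eta (xi i)) (fun i => eta (xi' i))
  | msim_precomp : forall W X Y xi xi' eta,
      msim X Y xi xi' -> is_mor W X eta ->
      msim W Y (fun i => xi (eta i)) (fun i => xi' (eta i)).

End Nerve.

Arguments dim {C}.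
Arguments valid {C}.
Arguments nondegenerate {C}.
Arguments is_mor {C}.
Arguments msim {C}.

(* An order-preserving xi : [q] -> [p] with p <= q either identifies two
   consecutive vertices i, i+1 or is the identity of [q].  In the first case
   the i-th arrow of X = Y o xi is the identity of Y_(xi i), so X factors
   through the codegeneracy s_i and is degenerate.  In the second case
   X = Y o id = Y and xi_* is the identity morphism. *)

From Stdlib Require Import List Arith Lia.

Arguments s0 {C}.
Arguments sarr {C}.
Arguments obj {C}.
Arguments seg {C}.
Arguments precomp {C}.

Section Nerve.
Variable C : Category.

Lemma chain_nth_dom (x : Ob C) (l : list (Arr C)) j d d' :
  chain C x l -> j < length l ->
  dom C (nth j l d) = match j with 0 => x | S k => cod C (nth k l d') end.
Proof.
  revert x j; induction l as [|a l IH]; intros x j Hc Hj; simpl in *; [lia|].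
  destruct Hc as [Ha Hc]. destruct j as [|j]; auto.
  rewrite (IH _ j Hc ltac:(lia)). destruct j; auto.
Qed.

Lemma dom_nth_arrow (Z : simplex C) j d : valid Z -> j < dim Z ->
  dom C (nth j (sarr Z) d) = obj Z j.
Proof.
  intros Hv Hj. rewrite (chain_nth_dom _ _ j d (idc C (s0 Z)) Hv Hj).
  destruct j; reflexivity.
Qed.

Lemma seg_diag (Z : simplex C) j : seg Z j j = idc C (obj Z j).
Proof. unfold seg. rewrite Nat.sub_diag. reflexivity. Qed.

Lemma seg_succ (Z : simplex C) j d : valid Z -> j < dim Z ->
  seg Z j (S j) = nth j (sarr Z) d.
Proof.
  intros Hv Hj. unfold seg. replace (S j - j) with 1 by lia.
  rewrite <- (dom_nth_arrow Z j d Hv Hj).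
  destruct (nth_split (sarr Z) d Hj) as [l1 [l2 [E Hl1]]].
  set (a := nth j (sarr Z) d) in *. rewrite E, skipn_app, <- Hl1, skipn_all, Nat.sub_diag.
  apply comp_id_r.
Qed.

Lemma nth_precomp_arrow (Y : simplex C) xi q i d : i < q ->
  nth i (sarr (precomp Y xi q)) d = seg Y (xi i) (xi (S i)).
Proof.
  intros Hi. cbn [sarr precomp].
  rewrite nth_indep with (d' := seg Y (xi 0) (xi 1))
    by (rewrite length_map, length_seq; exact Hi).
  rewrite (map_nth (fun k => seg Y (xi k) (xi (S k)))), seq_nth by exact Hi.
  reflexivity.
Qed.

Lemma arrows_ext (f : nat -> Arr C) (l : list (Arr C)) d :
  (forall j, j < length l -> f j = nth j l d) -> map f (seq 0 (length l)) = l.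
Proof.
  intros H. apply nth_ext with (d := f 0) (d' := d).
  - rewrite length_map, length_seq; reflexivity.
  - intros j Hj. rewrite length_map, length_seq in Hj.
    rewrite map_nth, seq_nth by exact Hj. apply H, Hj.
Qed.

Lemma precomp_id_on (Y : simplex C) xi : valid Y ->
  (forall i, i <= dim Y -> xi i = i) -> precomp Y xi (dim Y) = Y.
Proof.
  intros Hv Hid. destruct Y as [y0 l]. unfold precomp. rewrite (Hid 0) by lia.
  cbn. f_equal. apply arrows_ext with (d := idc C y0).
  intros j Hj. rewrite (Hid j), (Hid (S j)) by (unfold dim; cbn; lia).
  exact (seg_succ {| s0 := y0; sarr := l |} j _ Hv Hj).
Qed.

Lemma chain_remove_id (x o : Ob C) (l1 l2 : list (Arr C)) :
  chain C x (l1 ++ idc C o :: l2) -> chain C x (l1 ++ l2).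
Proof.
  revert x; induction l1 as [|b l1 IH]; intros x H; cbn in *.
  - destruct H as [Ho H]. rewrite cod_id in H. rewrite dom_id in Ho. subst. exact H.
  - destruct H; split; auto.
Qed.

Lemma obj_app_l (x : Ob C) (l1 m m' : list (Arr C)) i : i <= length l1 ->
  obj {| s0 := x; sarr := l1 ++ m |} i = obj {| s0 := x; sarr := l1 ++ m' |} i.
Proof.
  intros Hi. destruct i as [|k]; [reflexivity|]. cbn.
  rewrite !app_nth1 by lia. reflexivity.
Qed.

Definition codegeneracy (i j : nat) : nat := if j <=? i then j else j - 1.

Lemma surj_op_codegeneracy i n : i < S n -> surj_op (codegeneracy i) (S n) n.
Proof.
  intros Hi. unfold codegeneracy. split; [split|].
  - intros j Hj. destruct (Nat.leb_spec j i); lia.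
  - intros a b Hab Hb. destruct (Nat.leb_spec a i), (Nat.leb_spec b i); lia.
  - intros j Hj. destruct (Nat.leb_spec j i).
    + exists j. split; [lia|]. destruct (Nat.leb_spec j i); lia.
    + exists (S j). split; [lia|]. destruct (Nat.leb_spec (S j) i); lia.
Qed.

Lemma precomp_codegeneracy (x o : Ob C) (l1 l2 : list (Arr C)) :
  valid {| s0 := x; sarr := l1 ++ idc C o :: l2 |} ->
  precomp {| s0 := x; sarr := l1 ++ l2 |} (codegeneracy (length l1))
          (S (length (l1 ++ l2)))
  = {| s0 := x; sarr := l1 ++ idc C o :: l2 |}.
Proof.
  set (X := {| s0 := x; sarr := l1 ++ idc C o :: l2 |}).
  set (Y := {| s0 := x; sarr := l1 ++ l2 |}).
  intros HvX.
  assert (HvY : valid Y) by exact (chain_remove_id x o l1 l2 HvX).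
  assert (HlenX : S (length (l1 ++ l2)) = length (l1 ++ idc C o :: l2))
    by (rewrite !length_app; cbn; lia).
  unfold precomp, X. f_equal.
  rewrite HlenX. apply arrows_ext with (d := idc C o).
  intros j Hj. rewrite length_app in Hj; cbn in Hj.
  unfold codegeneracy. set (i := length l1).
  destruct (Nat.lt_trichotomy j i) as [Hlt|[Heq|Hgt]].
  - destruct (Nat.leb_spec j i), (Nat.leb_spec (S j) i); try lia.
    rewrite (seg_succ Y j (idc C o) HvY) by (cbn; rewrite length_app; lia).
    cbn. rewrite !app_nth1 by lia. reflexivity.
  - subst j. destruct (Nat.leb_spec i i), (Nat.leb_spec (S i) i); try lia.
    replace (S i - 1) with i by lia.
    rewrite seg_diag, (obj_app_l x l1 l2 (idc C o :: l2)) by lia. fold X.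
    rewrite <- (dom_nth_arrow X i (idc C o) HvX)
      by (cbn; rewrite length_app; cbn; lia).
    cbn. unfold i. rewrite nth_middle, dom_id. reflexivity.
  - destruct (Nat.leb_spec j i), (Nat.leb_spec (S j) i); try lia.
    replace (S j - 1) with (S (j - 1)) by lia.
    rewrite (seg_succ Y (j - 1) (idc C o) HvY) by (cbn; rewrite length_app; lia).
    cbn. rewrite !app_nth2 by lia.
    replace (j - length l1) with (S (j - 1 - length l1)) by lia. reflexivity.
Qed.

Lemma degenerate_of_id_arrow (x o : Ob C) (l1 l2 : list (Arr C)) :
  valid {| s0 := x; sarr := l1 ++ idc C o :: l2 |} ->
  degenerate C {| s0 := x; sarr := l1 ++ idc C o :: l2 |}.
Proof.
  intros Hv.
  assert (Hdim : dim {| s0 := x; sarr := l1 ++ idc C o :: l2 |}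
                 = S (length (l1 ++ l2)))
    by (unfold dim; cbn; rewrite !length_app; cbn; lia).
  exists {| s0 := x; sarr := l1 ++ l2 |}, (codegeneracy (length l1)).
  rewrite Hdim. split; [|split; [|split]].
  - exact (chain_remove_id x o l1 l2 Hv).
  - unfold dim; cbn; lia.
  - apply surj_op_codegeneracy. unfold dim; cbn; rewrite length_app; lia.
  - exact (precomp_codegeneracy x o l1 l2 Hv).
Qed.

Lemma degenerate_of_nth_id (X : simplex C) i o : valid X -> i < dim X ->
  nth i (sarr X) (idc C o) = idc C o -> degenerate C X.
Proof.
  intros Hv Hi Hid. destruct X as [x l].
  destruct (nth_split l (idc C o) Hi) as [l1 [l2 [E _]]].
  cbn in Hid. rewrite Hid in E. subst l.
  exact (degenerate_of_id_arrow x o l1 l2 Hv).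
Qed.

End Nerve.

Lemma repeat_step_dec (xi : nat -> nat) n :
  (exists i, i < n /\ xi i = xi (S i)) \/ (forall i, i < n -> xi i <> xi (S i)).
Proof.
  induction n as [|n [[i [Hi He]]|H]].
  - right; intros; lia.
  - left; exists i; split; [lia | exact He].
  - destruct (Nat.eq_dec (xi n) (xi (S n))) as [E|E].
    + left; exists n; split; [lia | exact E].
    + right; intros i Hi. destruct (Nat.eq_dec i n); [subst; exact E | apply H; lia].
Qed.

(* No repeated step forces xi (i + k) >= xi i + k; with only p + 1 values
   available this pins xi down to the identity. *)
Lemma order_pres_injective_id (xi : nat -> nat) q p :
  order_pres xi q p -> p <= q -> (forall i, i < q -> xi i <> xi (S i)) ->
  p = q /\ forall i, i <= q -> xi i = i.
Proof.
  intros [Hb Hm] Hpq Hstep.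
  assert (Hgrow : forall j i, i <= j -> j <= q -> xi i + (j - i) <= xi j).
  { induction j as [|j IH]; intros i Hij Hj.
    - replace i with 0 by lia. lia.
    - destruct (Nat.eq_dec i (S j)); [subst; rewrite Nat.sub_diag; lia|].
      specialize (IH i ltac:(lia) ltac:(lia)).
      specialize (Hm j (S j) ltac:(lia) Hj). specialize (Hstep j ltac:(lia)). lia. }
  pose proof (Hb q (le_n q)). pose proof (Hgrow q 0 ltac:(lia) (le_n q)).
  split; [lia|]. intros i Hi.
  pose proof (Hgrow q i Hi (le_n q)). pose proof (Hgrow i 0 ltac:(lia) Hi). lia.
Qed.

Theorem lemma19 (C : Category) (X Y : simplex C) (xi : nat -> nat) :
  nondegenerate X -> nondegenerate Y -> is_mor X Y xi ->
  ~ (X = Y /\ msim X Y xi (fun i => i)) ->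
  dim X < dim Y.
Proof.
  intros [HvX HnX] [HvY _] Hmor Hnot.
  pose proof Hmor as [_ [_ [Hop Hpre]]].
  destruct (Nat.lt_ge_cases (dim X) (dim Y)) as [Hlt|Hge]; [exact Hlt|]. exfalso.
  destruct (repeat_step_dec xi (dim X)) as [[i [Hi Hrep]]|Hstep].
  - apply HnX. apply (degenerate_of_nth_id C X i (obj Y (xi i)) HvX Hi).
    rewrite <- Hpre at 1. rewrite nth_precomp_arrow by exact Hi.
    rewrite <- Hrep. apply seg_diag.
  - destruct (order_pres_injective_id xi _ _ Hop Hge Hstep) as [Hdim Hid].
    assert (XY : X = Y).
    { rewrite <- Hpre, <- Hdim. apply precomp_id_on; [exact HvY|].
      rewrite Hdim. exact Hid. }
    apply Hnot. split; [exact XY|]. apply msim_refl; [exact Hmor | exact Hid].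
Qed.
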